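(* Any cut-free derivation of a linguistically marked {\bf MLL1} sequent is linguistically marked (i.e. all sequents occurring in it are linguistically marked).
   Context: {\bf MLL1}: formulas built from atomic $p(x_1,\ldots,x_n)$ ($p$ positive or negative predicate symbol) by tensor $\otimes$, par $\wp$, $\forall x$, $\exists x$; sequent calculus rules: $\vdash\overline A,A$ for atomic $A$, Cut, $(\wp)$: $\vdash\Gamma,A,B\Rightarrow\vdash\Gamma,A\wp B$, $(\otimes)$: $\vdash\Gamma,A$, $\vdash B,\Theta\Rightarrow\vdash\Gamma,A\otimes B,\Theta$, $(\forall)$: $\vdash\Gamma,A[v/x]$, $v\notin FV(\Gamma)\Rightarrow\vdash\Gamma,\forall xA$, $(\exists)$: $\vdash\Gamma,A[v/x]\Rightarrow\vdash\Gamma,\exists xA$. In a linguistically marked language, each $n$-ary predicate symbol $p$ has a valency $(k,n-k)$ with $v(\overline p)=(n-k,k)$; the first $k$ argument occurrences of $p(x_1,\ldots,x_n)$ have left polarity and the rest right polarity, and polarity of an occurrence in a compound formula, context or sequent is inherited from the atomic formula containing it. A formula, context or sequent is linguistically marked if every quantifier binds exactly one left and one right variable occurrence. *)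

From Stdlib Require Import List Arith Bool Permutation.
Import ListNotations.

Definition var := nat.

(** A language: every predicate symbol [p] (a nat) has an arity [arity p]
    and a valency [(lval p, arity p - lval p)] for the positive symbol [p];
    the negative symbol [p-bar] then has valency [(arity p - lval p, lval p)]. *)
Record language := {
  arity : nat -> nat;
  lval : nat -> nat;
  lval_le : forall p, lval p <= arity p
}.

(** Formulas of MLL1. [Atom true p xs] is the positive atom p(xs),
    [Atom false p xs] the negative atom p-bar(xs). *)
Inductive formula : Type :=
| Atom (pos : bool) (p : nat) (args : list var)
| Tens (A B : formula)
| Par (A B : formula)
| All (x : var) (A : formula)
| Ex (x : var) (A : formula).

Fixpoint dual (A : formula) : formula :=
  match A with
  | Atom b p xs => Atom (negb b) p xs
  | Tens A B => Par (dual A) (dual B)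
  | Par A B => Tens (dual A) (dual B)
  | All x A => Ex x (dual A)
  | Ex x A => All x (dual A)
  end.

Fixpoint wf (L : language) (A : formula) : Prop :=
  match A with
  | Atom _ p xs => length xs = arity L p
  | Tens A B | Par A B => wf L A /\ wf L B
  | All _ A | Ex _ A => wf L A
  end.

Fixpoint freeb (x : var) (A : formula) : bool :=
  match A with
  | Atom _ _ xs => existsb (Nat.eqb x) xs
  | Tens A B | Par A B => freeb x A || freeb x B
  | All y A | Ex y A => negb (Nat.eqb y x) && freeb x A
  end.

Fixpoint subst (x v : var) (A : formula) : formula :=
  match A with
  | Atom b p xs => Atom b p (map (fun y => if Nat.eqb y x then v else y) xs)
  | Tens A B => Tens (subst x v A) (subst x v B)
  | Par A B => Par (subst x v A) (subst x v B)
  | All y A => if Nat.eqb y x then All y A else All y (subst x v A)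
  | Ex y A => if Nat.eqb y x then Ex y A else Ex y (subst x v A)
  end.

(** [v] is free for [x] in [A]: no free occurrence of [x] in [A] lies in the
    scope of a quantifier binding [v] (so A[v/x] is capture-free). *)
Fixpoint free_for (v x : var) (A : formula) : Prop :=
  match A with
  | Atom _ _ _ => True
  | Tens A B | Par A B => free_for v x A /\ free_for v x B
  | All y A | Ex y A =>
      if Nat.eqb y x then True
      else (freeb x A = true -> y <> v) /\ free_for v x A
  end.

(** Number of left polarity arguments of an atom: k for p of valency (k,n-k),
    n-k for p-bar of valency (n-k,k). *)
Definition nleft (L : language) (b : bool) (p : nat) : nat :=
  if b then lval L p else arity L p - lval L p.

Definition count_var (x : var) (xs : list var) : nat :=
  length (filter (Nat.eqb x) xs).

Fixpoint occL (L : language) (x : var) (A : formula) : nat :=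
  match A with
  | Atom b p xs => count_var x (firstn (nleft L b p) xs)
  | Tens A B | Par A B => occL L x A + occL L x B
  | All y A | Ex y A => if Nat.eqb y x then 0 else occL L x A
  end.

Fixpoint occR (L : language) (x : var) (A : formula) : nat :=
  match A with
  | Atom b p xs => count_var x (skipn (nleft L b p) xs)
  | Tens A B | Par A B => occR L x A + occR L x B
  | All y A | Ex y A => if Nat.eqb y x then 0 else occR L x A
  end.

Fixpoint fmarked (L : language) (A : formula) : Prop :=
  match A with
  | Atom _ _ _ => True
  | Tens A B | Par A B => fmarked L A /\ fmarked L B
  | All x A | Ex x A => occL L x A = 1 /\ occR L x A = 1 /\ fmarked L A
  end.

Definition sequent := list formula.

Definition seq_marked (L : language) (G : sequent) : Prop := Forall (fmarked L) G.
Definition seq_wf (L : language) (G : sequent) : Prop := Forall (wf L) G.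

Inductive deriv : sequent -> Type :=
| d_ax (b : bool) (p : nat) (xs : list var) :
    deriv [Atom (negb b) p xs; Atom b p xs]
| d_exch (G D : sequent) :
    Permutation G D -> deriv G -> deriv D
| d_cut (G : sequent) (A : formula) (D : sequent) :
    deriv (G ++ [A]) -> deriv (dual A :: D) -> deriv (G ++ D)
| d_par (G : sequent) (A B : formula) :
    deriv (G ++ [A; B]) -> deriv (G ++ [Par A B])
| d_tens (G : sequent) (A B : formula) (D : sequent) :
    deriv (G ++ [A]) -> deriv (B :: D) -> deriv (G ++ [Tens A B] ++ D)
| d_all (G : sequent) (x v : var) (A : formula) :
    free_for v x A -> Forall (fun C => freeb v C = false) G ->
    deriv (G ++ [subst x v A]) -> deriv (G ++ [All x A])
| d_ex (G : sequent) (x v : var) (A : formula) :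
    free_for v x A ->
    deriv (G ++ [subst x v A]) -> deriv (G ++ [Ex x A]).

Fixpoint cut_free {G : sequent} (d : deriv G) : Prop :=
  match d with
  | d_ax _ _ _ => True
  | d_exch _ _ _ d1 => cut_free d1
  | d_cut _ _ _ _ _ => False
  | d_par _ _ _ d1 => cut_free d1
  | d_tens _ _ _ _ d1 d2 => cut_free d1 /\ cut_free d2
  | d_all _ _ _ _ _ _ d1 => cut_free d1
  | d_ex _ _ _ _ _ d1 => cut_free d1
  end.

Fixpoint all_sequents (P : sequent -> Prop) {G : sequent} (d : deriv G) : Prop :=
  P G /\
  match d with
  | d_ax _ _ _ => True
  | d_exch _ _ _ d1 => all_sequents P d1
  | d_cut _ _ _ d1 d2 => all_sequents P d1 /\ all_sequents P d2
  | d_par _ _ _ d1 => all_sequents P d1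
  | d_tens _ _ _ _ d1 d2 => all_sequents P d1 /\ all_sequents P d2
  | d_all _ _ _ _ _ _ d1 => all_sequents P d1
  | d_ex _ _ _ _ _ d1 => all_sequents P d1
  end.

Definition deriv_marked (L : language) {G : sequent} (d : deriv G) : Prop :=
  all_sequents (seq_marked L) d.

(* Every premise of a cut-free rule consists of subformulas of its conclusion,
   except that a quantifier rule replaces the bound variable x by a variable v
   free for x.  Such a substitution preserves marking: a quantifier of A[v/x]
   binding y either has a body left unchanged (y = x, or x not free in it), or
   has y distinct from both x and v, so renaming x to v changes none of the
   occurrences of y it counts.  Hence marking propagates from the end sequent
   upwards. *)
From Stdlib Require Import List Arith Bool Permutation.
Import ListNotations.

Lemma count_var_rename (x v y : var) (xs : list var) :
  y <> x -> y <> v ->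
  count_var y (map (fun z => if Nat.eqb z x then v else z) xs) = count_var y xs.
Proof.
  intros Hyx Hyv. unfold count_var.
  induction xs as [|z xs IH]; simpl; [reflexivity|].
  destruct (Nat.eqb_spec z x) as [->|_].
  - apply Nat.eqb_neq in Hyx, Hyv. rewrite Hyx, Hyv. exact IH.
  - destruct (Nat.eqb y z); simpl; rewrite IH; reflexivity.
Qed.

Lemma occL_subst (L : language) (x v y : var) (A : formula) :
  y <> x -> y <> v -> occL L y (subst x v A) = occL L y A.
Proof.
  intros Hyx Hyv.
  induction A as [b p xs | A IHA B IHB | A IHA B IHB | z A IHA | z A IHA]; simpl.
  - rewrite firstn_map. apply count_var_rename; assumption.
  - congruence.
  - congruence.
  - destruct (Nat.eqb z x); simpl; [reflexivity|]. rewrite IHA. reflexivity.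
  - destruct (Nat.eqb z x); simpl; [reflexivity|]. rewrite IHA. reflexivity.
Qed.

Lemma occR_subst (L : language) (x v y : var) (A : formula) :
  y <> x -> y <> v -> occR L y (subst x v A) = occR L y A.
Proof.
  intros Hyx Hyv.
  induction A as [b p xs | A IHA B IHB | A IHA B IHB | z A IHA | z A IHA]; simpl.
  - rewrite skipn_map. apply count_var_rename; assumption.
  - congruence.
  - congruence.
  - destruct (Nat.eqb z x); simpl; [reflexivity|]. rewrite IHA. reflexivity.
  - destruct (Nat.eqb z x); simpl; [reflexivity|]. rewrite IHA. reflexivity.
Qed.

Lemma subst_not_free (x v : var) (A : formula) :
  freeb x A = false -> subst x v A = A.
Proof.
  induction A as [b p xs | A IHA B IHB | A IHA B IHB | z A IHA | z A IHA];
    simpl; intro Hx.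
  - f_equal. induction xs as [|y xs IH]; simpl in *; [reflexivity|].
    apply orb_false_iff in Hx as [Hxy Hxs].
    rewrite (IH Hxs). destruct (Nat.eqb_spec y x) as [->|_]; [|reflexivity].
    rewrite Nat.eqb_refl in Hxy. discriminate.
  - apply orb_false_iff in Hx as [HA HB]. rewrite IHA, IHB; auto.
  - apply orb_false_iff in Hx as [HA HB]. rewrite IHA, IHB; auto.
  - destruct (Nat.eqb z x); simpl in *; [reflexivity|]. rewrite IHA; auto.
  - destruct (Nat.eqb z x); simpl in *; [reflexivity|]. rewrite IHA; auto.
Qed.

Lemma fmarked_quantifier_subst (L : language) (x v z : var) (A : formula) :
  z <> x -> (freeb x A = true -> z <> v) ->
  occL L z A = 1 -> occR L z A = 1 ->
  occL L z (subst x v A) = 1 /\ occR L z (subst x v A) = 1.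
Proof.
  intros Hzx Hzv HL HR.
  destruct (freeb x A) eqn:Hfree.
  - rewrite occL_subst, occR_subst by auto. auto.
  - rewrite subst_not_free by exact Hfree. auto.
Qed.

Lemma fmarked_subst (L : language) (x v : var) (A : formula) :
  free_for v x A -> fmarked L A -> fmarked L (subst x v A).
Proof.
  induction A as [b p xs | A IHA B IHB | A IHA B IHB | z A IHA | z A IHA];
    simpl; intros Hff Hm; auto.
  - destruct Hff, Hm. auto.
  - destruct Hff, Hm. auto.
  - destruct (Nat.eqb_spec z x) as [_|Hzx]; simpl; [exact Hm|].
    destruct Hff as [Hzv Hff], Hm as (HL & HR & Hm).
    destruct (fmarked_quantifier_subst L x v z A Hzx Hzv HL HR). auto.
  - destruct (Nat.eqb_spec z x) as [_|Hzx]; simpl; [exact Hm|].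
    destruct Hff as [Hzv Hff], Hm as (HL & HR & Hm).
    destruct (fmarked_quantifier_subst L x v z A Hzx Hzv HL HR). auto.
Qed.

Lemma seq_marked_app_cons (L : language) (G D : sequent) (A : formula) :
  seq_marked L (G ++ A :: D) <->
  seq_marked L G /\ fmarked L A /\ seq_marked L D.
Proof.
  unfold seq_marked. rewrite Forall_app, Forall_cons_iff. reflexivity.
Qed.

Lemma seq_marked_snoc (L : language) (G : sequent) (A : formula) :
  seq_marked L (G ++ [A]) <-> seq_marked L G /\ fmarked L A.
Proof.
  rewrite seq_marked_app_cons. unfold seq_marked. intuition.
Qed.

Lemma deriv_marked_of_cut_free (L : language) (G : sequent) (d : deriv G) :
  seq_marked L G -> cut_free d -> deriv_marked L d.
Proof.
  unfold deriv_marked.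
  induction d as [b p xs | G D HGD d IHd | G A D d1 IHd1 d2 IHd2
                 | G A B d IHd | G A B D d1 IHd1 d2 IHd2
                 | G x v A Hff Hv d IHd | G x v A Hff d IHd];
    simpl; intros HG Hcf; split; try exact HG.
  - exact I.
  - apply IHd; [|exact Hcf].
    exact (Permutation_Forall (Permutation_sym HGD) HG).
  - contradiction.
  - apply seq_marked_snoc in HG as [HG [HA HB]].
    apply IHd; [|exact Hcf].
    apply seq_marked_app_cons. unfold seq_marked. auto.
  - simpl in HG. apply seq_marked_app_cons in HG as (HG & [HA HB] & HD).
    destruct Hcf as [Hcf1 Hcf2]. split.
    + apply IHd1; [apply seq_marked_snoc; auto | exact Hcf1].
    + apply IHd2; [constructor; auto | exact Hcf2].
  - apply seq_marked_snoc in HG as [HG (_ & _ & HA)].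
    apply IHd; [|exact Hcf].
    apply seq_marked_snoc. auto using fmarked_subst.
  - apply seq_marked_snoc in HG as [HG (_ & _ & HA)].
    apply IHd; [|exact Hcf].
    apply seq_marked_snoc. auto using fmarked_subst.
Qed.

Theorem proposition3p4 (L : language) (G : sequent) (d : deriv G) :
  seq_wf L G -> seq_marked L G -> cut_free d -> deriv_marked L d.
Proof.
  intros _. apply deriv_marked_of_cut_free.
Qed.
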